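(* Let $\chi$ be a kernel as described in the context with $m_1(\chi,u)=0$ for all $u\in\mathbb{R}^+$. Let $f:\mathbb{R}^+\to\mathbb{R}$ be such that $\theta f$ and $\theta^2 f$ exist and are continuous on $\mathbb{R}^+$, and suppose there are constants $\alpha,\beta>0$ with $|f(x)|\le\alpha+\beta|\log x|$ for all $x\in\mathbb{R}^+$ (f need not be bounded). Then for every $w>0$ and $x\in\mathbb{R}^+$ the series defining $(I_w^{\chi}f)(x)$ converges absolutely, and for every $x\in\mathbb{R}^+$, $$\lim_{w\to+\infty} w\big[(I_w^{\chi}f)(x)-f(x)\big]=\frac{(\theta f)(x)}{2}.$$
   Context: A kernel is a continuous function $\chi:\mathbb{R}^+\to\mathbb{R}$ satisfying: (i) $\sum_{k=-\infty}^{+\infty}\chi(e^{-k}u)=1$ for every $u\in\mathbb{R}^+$; (ii) $M_2(\chi)<+\infty$ and $\lim_{\gamma\to+\infty}\sum_{|k-\log u|>\gamma}|\chi(e^{-k}u)|\,|k-\log u|^2=0$ uniformly with respect to $u\in\mathbb{R}^+$. Algebraic moments: $m_\nu(\chi,u)=\sum_{k\in\mathbb{Z}}\chi(e^{-k}u)(k-\log u)^\nu$; absolute moments: $M_\nu(\chi,u)=\sum_{k\in\mathbb{Z}}|\chi(e^{-k}u)|\,|k-\log u|^\nu$, $M_\nu(\chi)=\sup_{u>0}M_\nu(\chi,u)$. For $w>0$, $x\in\mathbb{R}^+$: $(I_w^{\chi}f)(x)=\sum_{k\in\mathbb{Z}}\chi(e^{-k}x^w)\,w\int_{k/w}^{(k+1)/w}f(e^u)\,du$.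 Mellin differential operator: $(\theta f)(x)=xf'(x)$, $\theta^2=\theta(\theta)$. *)

From Stdlib Require Import Reals Lra ZArith ClassicalEpsilon.
Open Scope R_scope.

Definition Zpartial (a : Z -> R) (N : nat) : R :=
  sum_f_R0 (fun i => a (Z.of_nat i - Z.of_nat N)%Z) (2 * N).

Definition Zseries (a : Z -> R) (l : R) : Prop := Un_cv (Zpartial a) l.

Definition Zabs_summable (a : Z -> R) : Prop :=
  exists l, Zseries (fun k => Rabs (a k)) l.

(* The value of sum_{k in Z} a k (meaningful when the series converges). *)
Definition Zsum (a : Z -> R) : R := epsilon (inhabits 0) (fun l => Zseries a l).

(* Riemann integral value of f over [a,b] (meaningful when f is integrable). *)
Definition Rint (f : R -> R) (a b : R) : R :=
  epsilon (inhabits 0)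
    (fun v => exists pr : Riemann_integrable f a b, RiemannInt pr = v).

Definition absmoment_term (chi : R -> R) (nu : nat) (u : R) (k : Z) : R :=
  Rabs (chi (exp (- IZR k) * u)) * (Rabs (IZR k - ln u)) ^ nu.

Definition moment_term (chi : R -> R) (nu : nat) (u : R) (k : Z) : R :=
  chi (exp (- IZR k) * u) * (IZR k - ln u) ^ nu.

(* Since the absolute-moment series have
   nonnegative terms, "M_2(chi) < +oo" (a sup over u of sums) is stated as a
   uniform bound on all partial sums, and the uniform limit in (ii) as a
   uniform bound on the partial sums of the tails. *)
Definition is_kernel (chi : R -> R) : Prop :=
  (forall u, 0 < u -> continuity_pt chi u) /\
  (forall u, 0 < u -> Zseries (fun k => chi (exp (- IZR k) * u)) 1) /\
  (exists B, forall u, 0 < u -> forall N, Zpartial (absmoment_term chi 2 u) N <= B) /\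
  (forall eps, 0 < eps -> exists g0, forall gamma, g0 < gamma ->
     forall u, 0 < u -> forall N,
       Zpartial (fun k => if Rlt_dec gamma (Rabs (IZR k - ln u))
                          then absmoment_term chi 2 u k else 0) N <= eps).

Definition Iw_term (chi f : R -> R) (w x : R) (k : Z) : R :=
  chi (exp (- IZR k) * Rpower x w) *
  (w * Rint (fun u => f (exp u)) (IZR k / w) ((IZR k + 1) / w)).

Definition Iw (chi f : R -> R) (w x : R) : R := Zsum (Iw_term chi f w x).

From Stdlib Require Import Reals Lra Lia ZArith ClassicalEpsilon.
From Coquelicot Require Import Coquelicot.
Open Scope R_scope.

(* Write g(u) = f(e^u), so that g' = (theta f)(e^u) and g'' = (theta^2 f)(e^u).  Around
   t0 = ln x, Taylor's formula with the continuity of theta^2 f bounds the remainder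
   g(u) - g(t0) - g'(t0)(u - t0) by C (u - t0)^2 near t0, and the logarithmic growth of f
   (linear growth of g) gives the same bound far from t0.  Averaging over [k/w, (k+1)/w]
   then gives w * int g = f(x) + (theta f)(x) (k - w ln x + 1/2) / w + O(((k - w ln x)^2 + 1)/w^2).
   Summing against chi(e^-k x^w), the partition of unity and m_1 = 0 leave
   f(x) + (theta f)(x) / (2w), and the error is controlled by M_0 + M_2, which is finite
   because M_2 is and chi is bounded near the diagonal |k - ln u| < 1.  Hence
   w (I_w f - f)(x) - (theta f)(x)/2 = O(1/w). *)

Lemma sum_f_R0_telescope (G : nat -> R) n :
  sum_f_R0 (fun i => G (S i) - G i) n = G (S n) - G 0%nat.
Proof. induction n; simpl; [|rewrite IHn]; ring. Qed.

Lemma Zpartial_S a N : Zpartial a (S N) =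
  Zpartial a N + a (- Z.of_nat (S N))%Z + a (Z.of_nat (S N)).
Proof.
  unfold Zpartial.
  replace (2 * S N)%nat with (S (S (2 * N))) by lia.
  rewrite decomp_sum by lia; rewrite Nat.pred_succ, tech5.
  replace (sum_f_R0 (fun i => a (Z.of_nat (S i) - Z.of_nat (S N))%Z) (2 * N))
    with (sum_f_R0 (fun i => a (Z.of_nat i - Z.of_nat N)%Z) (2 * N))
    by (apply sum_eq; intros i _; f_equal; lia).
  replace (Z.of_nat 0 - Z.of_nat (S N))%Z with (- Z.of_nat (S N))%Z by lia.
  replace (Z.of_nat (S (S (2 * N))) - Z.of_nat (S N))%Z with (Z.of_nat (S N)) by lia.
  ring.
Qed.

Lemma Zpartial_linear A B a b N :
  Zpartial (fun k => A * a k + B * b k) N = A * Zpartial a N + B * Zpartial b N.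
Proof. unfold Zpartial; induction (2 * N)%nat; simpl; [|rewrite IHn]; ring. Qed.

Lemma Zpartial_scal A a N : Zpartial (fun k => A * a k) N = A * Zpartial a N.
Proof. unfold Zpartial; induction (2 * N)%nat; simpl; [|rewrite IHn]; ring. Qed.

Lemma Zpartial_le a b N : (forall k, a k <= b k) -> Zpartial a N <= Zpartial b N.
Proof. intros H; apply sum_Rle; intros; apply H. Qed.

Lemma Zpartial_abs_le a N : Rabs (Zpartial a N) <= Zpartial (fun k => Rabs (a k)) N.
Proof. apply sum_f_R0_triangle. Qed.

Lemma Zpartial_dist_le a n m : (n <= m)%nat ->
  Rabs (Zpartial a m - Zpartial a n) <=
  Zpartial (fun k => Rabs (a k)) m - Zpartial (fun k => Rabs (a k)) n.
Proof.
  intros Hnm; induction Hnm as [|m _ IH].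
  - unfold Rminus; rewrite !Rplus_opp_r, Rabs_R0; lra.
  - rewrite !Zpartial_S.
    pose proof (Rabs_triang (Zpartial a m - Zpartial a n)
                  (a (- Z.of_nat (S m))%Z + a (Z.of_nat (S m)))).
    pose proof (Rabs_triang (a (- Z.of_nat (S m))%Z) (a (Z.of_nat (S m)))).
    replace (Zpartial a m + a (- Z.of_nat (S m))%Z + a (Z.of_nat (S m)) - Zpartial a n)
      with (Zpartial a m - Zpartial a n + (a (- Z.of_nat (S m))%Z + a (Z.of_nat (S m))))
      by ring.
    lra.
Qed.

Lemma Zseries_linear A B a b la lb : Zseries a la -> Zseries b lb ->
  Zseries (fun k => A * a k + B * b k) (A * la + B * lb).
Proof.
  unfold Zseries; intros Ha%is_lim_seq_Reals Hb%is_lim_seq_Reals.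
  apply is_lim_seq_Reals.
  eapply is_lim_seq_ext; [intros n; symmetry; apply Zpartial_linear|].
  exact (is_lim_seq_plus' _ _ _ _ (is_lim_seq_scal_l _ A la Ha)
                                  (is_lim_seq_scal_l _ B lb Hb)).
Qed.

Lemma Zsum_eq a l : Zseries a l -> Zsum a = l.
Proof.
  intros H; apply (UL_sequence (Zpartial a)); [|exact H].
  unfold Zsum; apply epsilon_spec; exists l; exact H.
Qed.

Lemma Zseries_abs_le a l K : Zseries a l ->
  (forall N, Zpartial (fun k => Rabs (a k)) N <= K) -> Rabs l <= K.
Proof.
  intros H%is_lim_seq_Reals%is_lim_seq_abs HK.
  exact (is_lim_seq_le _ _ _ _ (fun N => Rle_trans _ _ _ (Zpartial_abs_le a N) (HK N))
           H (is_lim_seq_const K)).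
Qed.

Lemma Zseries_nonneg_bounded a K : (forall k, 0 <= a k) ->
  (forall N, Zpartial a N <= K) -> exists l, Zseries a l.
Proof.
  intros Hpos HK.
  destruct (growing_cv (Zpartial a)) as [l Hl]; [| exists K; intros y [n ->]; apply HK |].
  - intros n; rewrite Zpartial_S.
    pose proof (Hpos (- Z.of_nat (S n))%Z); pose proof (Hpos (Z.of_nat (S n))); lra.
  - exists l; exact Hl.
Qed.

Lemma Zabs_summable_Zseries a : Zabs_summable a -> exists l, Zseries a l.
Proof.
  intros [L HL].
  destruct (Rcomplete.R_complete (Zpartial a)) as [l Hl]; [|exists l; exact Hl].
  intros eps Heps; destruct (CV_Cauchy _ (exist _ L HL) eps Heps) as [N HN].
  exists N; intros n m Hn Hm; unfold Rdist.
  assert (Hdist : forall p q, (N <= p <= q)%nat -> Rabs (Zpartial a q - Zpartial a p) < eps).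
  { intros p q Hpq.
    eapply Rle_lt_trans; [apply Zpartial_dist_le; lia|].
    eapply Rle_lt_trans; [apply Rle_abs | apply HN; lia]. }
  destruct (Nat.le_ge_cases n m).
  - rewrite Rabs_minus_sym; apply Hdist; lia.
  - apply Hdist; lia.
Qed.

Lemma Zpartial_abs_dominated a b D P N : 0 <= D ->
  (forall k, Rabs (a k) <= D * b k) -> (forall N, Zpartial b N <= P) ->
  Zpartial (fun k => Rabs (a k)) N <= D * P.
Proof.
  intros HD Hab HP.
  eapply Rle_trans; [apply (Zpartial_le _ _ N Hab)|].
  rewrite Zpartial_scal; apply Rmult_le_compat_l; auto.
Qed.

Lemma Rabs_increment_le F F' a b L :
  (forall s, Rmin a b <= s <= Rmax a b -> derivable_pt_lim F s (F' s)) ->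
  (forall s, Rmin a b <= s <= Rmax a b -> Rabs (F' s) <= L) ->
  Rabs (F b - F a) <= L * Rabs (b - a).
Proof.
  intros HD HL; destruct (MVT_abs F F' a b HD) as [c [-> Hc]].
  apply Rmult_le_compat_r; [apply Rabs_pos | auto].
Qed.

Lemma Rabs_between_le t0 u s :
  Rmin t0 u <= s <= Rmax t0 u -> Rabs (s - t0) <= Rabs (u - t0).
Proof. unfold Rmin, Rmax, Rabs; repeat destruct Rle_dec; repeat destruct Rcase_abs; lra. Qed.

Section QuadraticRemainder.
Variables (g h h2 : R -> R) (t0 A0 A1 : R).
Hypothesis g_deriv : forall u, derivable_pt_lim g u (h u).
Hypothesis h_deriv : forall u, derivable_pt_lim h u (h2 u).
Hypothesis h2_cont : forall u, continuity_pt h2 u.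
Hypothesis A1_ge0 : 0 <= A1.
Hypothesis g_growth : forall u, Rabs (g u) <= A0 + A1 * Rabs (u - t0).

Lemma remainder_deriv u :
  derivable_pt_lim (fun s => g s - g t0 - h t0 * (s - t0)) u (h u - h t0).
Proof.
  replace (h u - h t0) with (h u - 0 - h t0 * (1 - 0)) by ring.
  apply derivable_pt_lim_minus;
    [apply derivable_pt_lim_minus; [apply g_deriv | apply derivable_pt_lim_const]|].
  apply derivable_pt_lim_scal, derivable_pt_lim_minus;
    [apply derivable_pt_lim_id | apply derivable_pt_lim_const].
Qed.

Lemma quadratic_remainder_near : exists K, 0 <= K /\ forall u, Rabs (u - t0) <= 1 ->
  Rabs (g u - g t0 - h t0 * (u - t0)) <= K * (u - t0) ^ 2.
Proof.
  destruct (continuity_ab_maj (fun s => Rabs (h2 s)) (t0 - 1) (t0 + 1)) as [m [Hm _]];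
    [lra | intros c _; apply (continuity_pt_comp h2 Rabs);
           [apply h2_cont | apply Rcontinuity_abs]|].
  exists (Rabs (h2 m)); split; [apply Rabs_pos|].
  intros u Hu.
  assert (Hwin : forall s, Rabs (s - t0) <= Rabs (u - t0) -> t0 - 1 <= s <= t0 + 1).
  { intros s Hs; revert Hs Hu; unfold Rabs; repeat destruct Rcase_abs; lra. }
  assert (Hh : forall s, Rmin t0 u <= s <= Rmax t0 u ->
                 Rabs (h s - h t0) <= Rabs (h2 m) * Rabs (u - t0)).
  { intros s Hs.
    eapply Rle_trans; [apply (Rabs_increment_le h h2)|].
    - intros; apply h_deriv.
    - intros r Hr; apply Hm, Hwin.
      eapply Rle_trans; apply Rabs_between_le; eassumption.
    - apply Rmult_le_compat_l; [apply Rabs_pos | apply Rabs_between_le, Hs]. }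
  pose proof (Rabs_increment_le _ _ t0 u _ (fun s _ => remainder_deriv s) Hh) as Hr.
  cbv beta in Hr.
  replace (g u - g t0 - h t0 * (u - t0) - (g t0 - g t0 - h t0 * (t0 - t0)))
    with (g u - g t0 - h t0 * (u - t0)) in Hr by ring.
  rewrite <- pow2_abs; simpl; rewrite Rmult_1_r, <- Rmult_assoc; exact Hr.
Qed.

Lemma quadratic_remainder_far u : 1 <= Rabs (u - t0) ->
  Rabs (g u - g t0 - h t0 * (u - t0)) <= (2 * A0 + A1 + Rabs (h t0)) * (u - t0) ^ 2.
Proof.
  intros Hq; rewrite <- pow2_abs.
  set (q := Rabs (u - t0)) in *.
  assert (Hgt0 : Rabs (g t0) <= A0).
  { pose proof (g_growth t0) as H; rewrite Rminus_diag, Rabs_R0, Rmult_0_r in H; lra. }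
  assert (HR : Rabs (g u - g t0 - h t0 * (u - t0)) <= Rabs (g u) + Rabs (g t0) + Rabs (h t0) * q).
  { unfold q; rewrite <- Rabs_mult.
    pose proof (Rabs_triang (g u - g t0) (- (h t0 * (u - t0)))) as H1.
    pose proof (Rabs_triang (g u) (- g t0)) as H2.
    rewrite !Rabs_Ropp in H1, H2; unfold Rminus in *; lra. }
  pose proof (g_growth u) as Hgu; fold q in Hgu.
  pose proof (Rabs_pos (g t0)); pose proof (Rabs_pos (h t0)).
  assert (Hq2 : q <= q ^ 2) by nra.
  assert (H1q : 1 <= q ^ 2) by nra.
  pose proof (Rmult_le_compat_l A0 _ _ ltac:(lra) H1q).
  pose proof (Rmult_le_compat_l A1 _ _ A1_ge0 Hq2).
  pose proof (Rmult_le_compat_l (Rabs (h t0)) _ _ ltac:(lra) Hq2).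
  lra.
Qed.

Lemma quadratic_remainder_bound : exists C, 0 <= C /\ forall u,
  Rabs (g u - g t0 - h t0 * (u - t0)) <= C * (u - t0) ^ 2.
Proof.
  destruct quadratic_remainder_near as [K [HK Hnear]].
  assert (HA0 : 0 <= A0).
  { pose proof (g_growth t0); pose proof (Rabs_pos (g t0)).
    rewrite Rminus_diag, Rabs_R0, Rmult_0_r in *; lra. }
  exists (K + (2 * A0 + A1 + Rabs (h t0))); split; [pose proof (Rabs_pos (h t0)); lra|].
  intros u; pose proof (pow2_ge_0 (u - t0)); pose proof (Rabs_pos (h t0)).
  assert (0 <= K * (u - t0) ^ 2) by (apply Rmult_le_pos; lra).
  assert (0 <= (2 * A0 + A1 + Rabs (h t0)) * (u - t0) ^ 2) by (apply Rmult_le_pos; lra).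
  destruct (Rle_lt_dec (Rabs (u - t0)) 1) as [Hq | Hq].
  - pose proof (Hnear u Hq); lra.
  - pose proof (quadratic_remainder_far u ltac:(lra)); lra.
Qed.

End QuadraticRemainder.

Lemma Rint_RInt f a b : ex_RInt f a b -> Rint f a b = RInt f a b.
Proof.
  intros Hex; unfold Rint; set (pr0 := ex_RInt_Reals_0 _ _ _ Hex).
  destruct (epsilon_spec (inhabits 0)
              (fun v => exists pr : Riemann_integrable f a b, RiemannInt pr = v))
    as [pr <-]; [now exists (RiemannInt pr0), pr0|].
  symmetry; apply RInt_Reals.
Qed.

Lemma window_average_affine c0 c1 t0 w z : 0 < w ->
  w * RInt (fun s => c0 + c1 * (s - t0)) (z / w) ((z + 1) / w)
  = c0 + c1 * (z - w * t0 + 1 / 2) / w.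
Proof.
  intros Hw.
  set (F s := c0 * s + c1 * ((s - t0) ^ 2 / 2)).
  assert (HF : is_RInt (fun s => c0 + c1 * (s - t0)) (z / w) ((z + 1) / w)
                 (F ((z + 1) / w) - F (z / w))).
  { apply (is_RInt_derive (V := R_CompleteNormedModule)); intros s _.
    - unfold F; auto_derive; [easy | field].
    - apply continuity_pt_filterlim; reg. }
  rewrite (is_RInt_unique _ _ _ _ HF); unfold F; field; lra.
Qed.

Lemma sqr_window_le t0 w z t : 0 < w -> z <= w * t <= z + 1 ->
  (t - t0) ^ 2 <= 2 * ((z - w * t0) ^ 2 + 1) / (w * w).
Proof.
  intros Hw Ht.
  replace ((t - t0) ^ 2) with ((w * t - w * t0) ^ 2 / (w * w)) by (field; lra).
  apply Rmult_le_compat_r; [left; apply Rinv_0_lt_compat; nra|].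
  pose proof (pow2_ge_0 (z - w * t0 - (w * t - z))); nra.
Qed.

Section WindowAverage.
Variables (g h : R -> R) (t0 C : R).
Hypothesis g_cont : forall u, continuous g u.
Hypothesis C_ge0 : 0 <= C.
Hypothesis remainder_bound :
  forall u, Rabs (g u - g t0 - h t0 * (u - t0)) <= C * (u - t0) ^ 2.

Lemma window_average_expansion w z : 0 < w ->
  Rabs (w * Rint g (z / w) ((z + 1) / w) - (g t0 + h t0 * (z - w * t0 + 1 / 2) / w))
  <= 2 * C * ((z - w * t0) ^ 2 + 1) / (w * w).
Proof.
  intros Hw; set (a := z / w); set (b := (z + 1) / w).
  set (lin := fun s => g t0 + h t0 * (s - t0)).
  assert (Hab : a <= b) by (unfold a, b, Rdiv; apply Rmult_le_compat_r;
                              [left; apply Rinv_0_lt_compat |]; lra).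
  assert (Hexg : ex_RInt g a b)
    by (apply (ex_RInt_continuous (V := R_CompleteNormedModule)); auto).
  assert (Hexl : ex_RInt lin a b)
    by (apply (ex_RInt_continuous (V := R_CompleteNormedModule)); intros;
        apply continuity_pt_filterlim; unfold lin; reg).
  set (M := 2 * C * ((z - w * t0) ^ 2 + 1) / (w * w)).
  assert (Hdiff : Rabs (RInt (fun s => g s - lin s) a b) <= (b - a) * M).
  { apply abs_RInt_le_const;
      [exact Hab | now apply (ex_RInt_minus (V := R_CompleteNormedModule)) |].
    intros t [Hat Htb]; unfold lin.
    replace (g t - (g t0 + h t0 * (t - t0))) with (g t - g t0 - h t0 * (t - t0)) by ring.
    eapply Rle_trans; [apply remainder_bound|].
    apply Rle_trans with (C * (2 * ((z - w * t0) ^ 2 + 1) / (w * w)));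
      [| right; unfold M; field; lra].
    apply Rmult_le_compat_l; [exact C_ge0|].
    apply sqr_window_le; [exact Hw|]; unfold a, b in *; split.
    - apply (Rmult_le_compat_l w) in Hat; [|lra].
      replace (w * (z / w)) with z in Hat by (field; lra); exact Hat.
    - apply (Rmult_le_compat_l w) in Htb; [|lra].
      replace (w * ((z + 1) / w)) with (z + 1) in Htb by (field; lra); exact Htb. }
  rewrite Rint_RInt by exact Hexg.
  replace (RInt g a b) with (RInt lin a b + RInt (fun s => g s - lin s) a b)
    by (rewrite (RInt_minus (V := R_CompleteNormedModule)) by assumption; cbn; ring).
  rewrite Rmult_plus_distr_l; unfold lin at 1, a, b; rewrite window_average_affine by exact Hw.
  fold a b.
  replace (g t0 + h t0 * (z - w * t0 + 1 / 2) / w + w * RInt (fun s => g s - lin s) a b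
           - (g t0 + h t0 * (z - w * t0 + 1 / 2) / w))
    with (w * RInt (fun s => g s - lin s) a b) by ring.
  rewrite Rabs_mult, Rabs_right by lra.
  replace M with (w * ((b - a) * M)) by (unfold a, b; field; lra).
  apply Rmult_le_compat_l; lra.
Qed.

End WindowAverage.

Definition clamp (t : R) : R := Rmin (Rmax t (-1)) 2.

Lemma clamp_range t : -1 <= clamp t <= 2.
Proof. unfold clamp, Rmin, Rmax; repeat destruct Rle_dec; lra. Qed.

Lemma clamp_step_ge0 t : 0 <= clamp (t + 1) - clamp t.
Proof. unfold clamp, Rmin, Rmax; repeat destruct Rle_dec; lra. Qed.

Lemma clamp_step_near t : Rabs t < 1 -> clamp (t + 1) - clamp t = 1.
Proof. unfold clamp, Rmin, Rmax, Rabs; repeat destruct Rle_dec; destruct Rcase_abs; lra. Qed.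

Lemma Zpartial_clamp_step_le c N :
  Zpartial (fun k => clamp (IZR k + 1 - c) - clamp (IZR k - c)) N <= 3.
Proof.
  unfold Zpartial.
  set (G i := clamp (IZR (Z.of_nat i - Z.of_nat N) - c)).
  rewrite (sum_eq _ (fun i => G (S i) - G i)).
  - rewrite sum_f_R0_telescope.
    pose proof (clamp_range (IZR (Z.of_nat (S (2 * N)) - Z.of_nat N) - c)).
    pose proof (clamp_range (IZR (Z.of_nat 0 - Z.of_nat N) - c)).
    unfold G; lra.
  - intros i _; unfold G.
    replace (Z.of_nat (S i) - Z.of_nat N)%Z with (Z.of_nat i - Z.of_nat N + 1)%Z by lia.
    rewrite plus_IZR; do 3 f_equal; ring.
Qed.

Definition absmoment02_term (chi : R -> R) (u : R) (k : Z) : R :=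
  absmoment_term chi 0 u k + absmoment_term chi 2 u k.

Lemma kernel_absmoment02_bounded chi : is_kernel chi -> exists P, 0 <= P /\
  forall u, 0 < u -> forall N, Zpartial (absmoment02_term chi u) N <= P.
Proof.
  intros [Hcont [_ [[B HB] _]]].
  destruct (continuity_ab_maj (fun v => Rabs (chi v)) (exp (-1)) (exp 1)) as [m [Hm _]].
  { left; apply exp_increasing; lra. }
  { intros c Hc; apply (continuity_pt_comp chi Rabs); [|apply Rcontinuity_abs].
    apply Hcont; pose proof (exp_pos (-1)); lra. }
  set (Mc := Rabs (chi m)) in *.
  assert (HMc : 0 <= Mc) by apply Rabs_pos.
  exists (2 * Rabs B + 3 * Mc); split; [pose proof (Rabs_pos B); lra|].
  intros u Hu N.
  (* The indicator of [|k - ln u| < 1] is dominated by the steps of [clamp],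
     whose sum telescopes. *)
  assert (Hterm : forall k, absmoment02_term chi u k <=
    2 * absmoment_term chi 2 u k + Mc * (clamp (IZR k + 1 - ln u) - clamp (IZR k - ln u))).
  { intros k; unfold absmoment02_term, absmoment_term; simpl pow; rewrite Rmult_1_r.
    set (t := IZR k - ln u); set (v := exp (- IZR k) * u).
    replace (IZR k + 1 - ln u) with (t + 1) by (unfold t; ring).
    pose proof (Rabs_pos (chi v)); pose proof (Rabs_pos t).
    destruct (Rlt_dec (Rabs t) 1) as [Hnear | Hfar].
    - assert (Hv : exp (-1) <= v <= exp 1).
      { unfold v; rewrite <- (exp_ln u Hu), <- exp_plus.
        revert Hnear; unfold t, Rabs; destruct Rcase_abs; intros;
          split; left; apply exp_increasing; lra. }
      pose proof (Hm v Hv); rewrite clamp_step_near by exact Hnear.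
      assert (0 <= Rabs (chi v) * (Rabs t * Rabs t)) by (apply Rmult_le_pos; nra).
      lra.
    - pose proof (clamp_step_ge0 t).
      assert (Ht : 1 <= Rabs t * Rabs t) by nra.
      pose proof (Rmult_le_compat_l (Rabs (chi v)) _ _ ltac:(lra) Ht).
      assert (0 <= Mc * (clamp (t + 1) - clamp t)) by (apply Rmult_le_pos; lra).
      lra. }
  eapply Rle_trans; [apply (Zpartial_le _ _ N Hterm)|].
  rewrite Zpartial_linear.
  pose proof (HB u Hu N); pose proof (Zpartial_clamp_step_le (ln u) N); pose proof (Rle_abs B).
  assert (Mc * Zpartial (fun k => clamp (IZR k + 1 - ln u) - clamp (IZR k - ln u)) N <= Mc * 3)
    by (apply Rmult_le_compat_l; assumption).
  lra.
Qed.

Lemma kantorovich_mean_expansion (f d1 d2 : R -> R) (alpha beta x : R) :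
  (forall y, 0 < y -> derivable_pt_lim f y (d1 y)) ->
  (forall y, 0 < y -> derivable_pt_lim (fun y => y * d1 y) y (d2 y)) ->
  (forall y, 0 < y -> continuity_pt (fun y => y * d2 y) y) ->
  0 <= beta ->
  (forall y, 0 < y -> Rabs (f y) <= alpha + beta * Rabs (ln y)) ->
  0 < x ->
  exists C, 0 <= C /\ forall w z, 0 < w ->
    Rabs (w * Rint (fun u => f (exp u)) (z / w) ((z + 1) / w)
          - (f x + x * d1 x * (z - w * ln x + 1 / 2) / w))
    <= C * ((z - w * ln x) ^ 2 + 1) / (w * w).
Proof.
  intros Hd1 Hd2 Hc2 Hbeta Hgrowth Hx.
  set (g u := f (exp u)); set (h u := exp u * d1 (exp u)); set (h2 u := exp u * d2 (exp u)).
  assert (g_deriv : forall u, derivable_pt_lim g u (h u)).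
  { intros u; unfold g, h; rewrite Rmult_comm.
    apply (derivable_pt_lim_comp exp f); [apply derivable_pt_lim_exp | apply Hd1, exp_pos]. }
  assert (h_deriv : forall u, derivable_pt_lim h u (h2 u)).
  { intros u; unfold h, h2; rewrite Rmult_comm.
    apply (derivable_pt_lim_comp exp (fun y => y * d1 y));
      [apply derivable_pt_lim_exp | apply Hd2, exp_pos]. }
  assert (h2_cont : forall u, continuity_pt h2 u).
  { intros u; apply (continuity_pt_comp exp (fun y => y * d2 y));
      [apply derivable_continuous_pt, derivable_pt_exp | apply Hc2, exp_pos]. }
  assert (g_growth : forall u,
            Rabs (g u) <= (alpha + beta * Rabs (ln x)) + beta * Rabs (u - ln x)).
  { intros u; unfold g; eapply Rle_trans; [apply Hgrowth, exp_pos|]; rewrite ln_exp.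
    pose proof (Rabs_triang (u - ln x) (ln x)) as Htri; rewrite Rplus_comm in Htri.
    replace (ln x + (u - ln x)) with u in Htri by ring.
    pose proof (Rmult_le_compat_l beta _ _ Hbeta Htri); lra. }
  destruct (quadratic_remainder_bound g h h2 (ln x) _ beta g_deriv h_deriv h2_cont Hbeta g_growth)
    as [C [HC Hrem]].
  exists (2 * C); split; [lra|]; intros w z Hw.
  assert (g_cont : forall u, continuous g u).
  { intros u; apply continuity_pt_filterlim, derivable_continuous_pt; exists (h u); apply g_deriv. }
  pose proof (window_average_expansion g h (ln x) C g_cont HC Hrem w z Hw) as Hwin.
  unfold g, h in Hwin; rewrite exp_ln in Hwin by exact Hx; exact Hwin.
Qed.

Section KantorovichOperator.
Variables (chi f d1 d2 : R -> R) (alpha beta : R).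
Hypothesis chi_kernel : is_kernel chi.
Hypothesis chi_moment1 : forall u, 0 < u -> Zseries (moment_term chi 1 u) 0.
Hypothesis f_deriv : forall x, 0 < x -> derivable_pt_lim f x (d1 x).
Hypothesis thetaf_deriv : forall x, 0 < x -> derivable_pt_lim (fun y => y * d1 y) x (d2 x).
Hypothesis theta2f_cont : forall x, 0 < x -> continuity_pt (fun y => y * d2 y) x.
Hypothesis beta_ge0 : 0 <= beta.
Hypothesis f_growth : forall x, 0 < x -> Rabs (f x) <= alpha + beta * Rabs (ln x).

Lemma Iw_term_expansion x : 0 < x -> exists C, 0 <= C /\ forall w k, 0 < w ->
  Rabs (Iw_term chi f w x k
        - ((f x + x * d1 x / (2 * w)) * chi (exp (- IZR k) * Rpower x w)
           + x * d1 x / w * moment_term chi 1 (Rpower x w) k))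
  <= C / (w * w) * absmoment02_term chi (Rpower x w) k.
Proof.
  intros Hx.
  destruct (kantorovich_mean_expansion f d1 d2 alpha beta x f_deriv thetaf_deriv theta2f_cont
              beta_ge0 f_growth Hx) as [C [HC Hmean]].
  exists C; split; [exact HC|]; intros w k Hw.
  unfold Iw_term, moment_term, absmoment02_term, absmoment_term; rewrite ln_Rpower.
  set (c := chi (exp (- IZR k) * Rpower x w)); set (s := IZR k - w * ln x).
  pose proof (Hmean w (IZR k) Hw) as Hk; fold s in Hk.
  set (m := w * Rint (fun u => f (exp u)) (IZR k / w) ((IZR k + 1) / w)) in *.
  replace (c * m - ((f x + x * d1 x / (2 * w)) * c + x * d1 x / w * (c * s ^ 1)))
    with (c * (m - (f x + x * d1 x * (s + 1 / 2) / w))) by (field; lra).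
  rewrite Rabs_mult, pow2_abs, pow_O.
  replace (C / (w * w) * (Rabs c * 1 + Rabs c * s ^ 2))
    with (Rabs c * (C * (s ^ 2 + 1) / (w * w))) by (field; lra).
  apply Rmult_le_compat_l; [apply Rabs_pos | exact Hk].
Qed.

Lemma Iw_term_abs_summable w x : 0 < w -> 0 < x -> Zabs_summable (Iw_term chi f w x).
Proof.
  intros Hw Hx.
  destruct (kernel_absmoment02_bounded chi chi_kernel) as [P [_ HP]].
  destruct (Iw_term_expansion x Hx) as [C [HC Hexp]].
  set (u := Rpower x w) in *; assert (Hu : 0 < u) by apply exp_pos.
  set (A := Rabs (f x) + Rabs (x * d1 x) / w).
  assert (HA : 0 <= A).
  { unfold A; pose proof (Rabs_pos (f x)).
    pose proof (Rdiv_le_0_compat _ _ (Rabs_pos (x * d1 x)) Hw); lra. }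
  assert (Happrox : forall k,
    Rabs ((f x + x * d1 x / (2 * w)) * chi (exp (- IZR k) * u)
          + x * d1 x / w * moment_term chi 1 u k)
    <= A * absmoment02_term chi u k).
  { intros k; unfold moment_term, absmoment02_term, absmoment_term.
    set (c := chi (exp (- IZR k) * u)); set (s := IZR k - ln u).
    replace ((f x + x * d1 x / (2 * w)) * c + x * d1 x / w * (c * s ^ 1))
      with (c * (f x + x * d1 x / w * (1 / 2 + s))) by (field; lra).
    rewrite pow2_abs, pow_O, Rabs_mult.
    replace (A * (Rabs c * 1 + Rabs c * s ^ 2)) with (Rabs c * (A * (1 + s ^ 2))) by ring.
    apply Rmult_le_compat_l; [apply Rabs_pos|].
    assert (Hs : Rabs (1 / 2 + s) <= 1 + s ^ 2)
      by (unfold Rabs; destruct Rcase_abs; pose proof (pow2_ge_0 (s - 1 / 2));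
          pose proof (pow2_ge_0 (s + 1 / 2)); nra).
    eapply Rle_trans; [apply Rabs_triang|]; rewrite Rabs_mult.
    unfold A, Rdiv; rewrite Rabs_mult, Rabs_inv, (Rabs_pos_eq w) by lra.
    pose proof (Rabs_pos (f x)); pose proof (Rabs_pos (1 / 2 + s)).
    pose proof (Rmult_le_pos _ _ (Rabs_pos (x * d1 x)) (Rlt_le _ _ (Rinv_0_lt_compat w Hw))).
    pose proof (pow2_ge_0 s). nra. }
  apply (Zseries_nonneg_bounded _ ((A + C / (w * w)) * P)); [intros; apply Rabs_pos|].
  intros N; apply (Zpartial_abs_dominated _ (absmoment02_term chi u));
    [| intros k | apply HP, Hu].
  - pose proof (Rdiv_le_0_compat C (w * w) HC ltac:(nra)); lra.
  - specialize (Hexp w k Hw); specialize (Happrox k); fold u in Hexp.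
    pose proof (Rabs_triang_inv (Iw_term chi f w x k)
      ((f x + x * d1 x / (2 * w)) * chi (exp (- IZR k) * u)
       + x * d1 x / w * moment_term chi 1 u k)).
    lra.
Qed.

Lemma Iw_rate x : 0 < x -> exists K, 0 <= K /\ forall w, 0 < w ->
  Rabs (w * (Iw chi f w x - f x) - x * d1 x / 2) <= K / w.
Proof.
  intros Hx.
  destruct (kernel_absmoment02_bounded chi chi_kernel) as [P [HP0 HP]].
  destruct (Iw_term_expansion x Hx) as [C [HC Hexp]].
  exists (C * P); split; [nra|]; intros w Hw.
  set (u := Rpower x w) in *; assert (Hu : 0 < u) by apply exp_pos.
  destruct (Zabs_summable_Zseries _ (Iw_term_abs_summable w x Hw Hx)) as [l Hl].
  unfold Iw; rewrite (Zsum_eq _ _ Hl).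
  set (A := f x + x * d1 x / (2 * w)); set (B := x * d1 x / w).
  destruct chi_kernel as [_ [chi_unity _]].
  assert (Hrem : Zseries (fun k => 1 * Iw_term chi f w x k
                   + -1 * (A * chi (exp (- IZR k) * u) + B * moment_term chi 1 u k))
                   (1 * l + -1 * (A * 1 + B * 0)))
    by (apply Zseries_linear; [exact Hl | apply Zseries_linear; auto]).
  assert (Hl_A : Rabs (l - A) <= C / (w * w) * P).
  { replace (l - A) with (1 * l + -1 * (A * 1 + B * 0)) by ring.
    apply (Zseries_abs_le _ _ _ Hrem); intros N.
    apply (Zpartial_abs_dominated _ (absmoment02_term chi u));
      [apply Rdiv_le_0_compat; nra | | apply HP, Hu].
    intros k; replace (1 * _ + -1 * _) with
      (Iw_term chi f w x k - (A * chi (exp (- IZR k) * u) + B * moment_term chi 1 u k)) by ring.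
    apply Hexp, Hw. }
  replace (w * (l - f x) - x * d1 x / 2) with (w * (l - A)) by (unfold A; field; lra).
  rewrite Rabs_mult, (Rabs_pos_eq w) by lra.
  replace (C * P / w) with (w * (C / (w * w) * P)) by (field; lra).
  apply Rmult_le_compat_l; lra.
Qed.

End KantorovichOperator.

Theorem mainTheorem3 (chi f d1 d2 : R -> R) (alpha beta : R) :
  is_kernel chi ->
  (forall u, 0 < u -> Zseries (moment_term chi 1 u) 0) ->
  (forall x, 0 < x -> derivable_pt_lim f x (d1 x)) ->
  (forall x, 0 < x -> continuity_pt (fun y => y * d1 y) x) ->
  (forall x, 0 < x -> derivable_pt_lim (fun y => y * d1 y) x (d2 x)) ->
  (forall x, 0 < x -> continuity_pt (fun y => y * d2 y) x) ->
  0 < alpha -> 0 < beta ->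
  (forall x, 0 < x -> Rabs (f x) <= alpha + beta * Rabs (ln x)) ->
  (forall w x, 0 < w -> 0 < x -> Zabs_summable (Iw_term chi f w x)) /\
  (forall x, 0 < x ->
     forall eps, 0 < eps -> exists W, forall w, W < w ->
       Rabs (w * (Iw chi f w x - f x) - (x * d1 x) / 2) < eps).
Proof.
  intros Hchi Hm1 Hd1 _ Hd2 Hc2 _ Hbeta Hgrowth.
  apply Rlt_le in Hbeta.
  split; [exact (Iw_term_abs_summable chi f d1 d2 alpha beta Hchi Hd1 Hd2 Hc2 Hbeta Hgrowth)|].
  intros x Hx eps Heps.
  destruct (Iw_rate chi f d1 d2 alpha beta Hchi Hm1 Hd1 Hd2 Hc2 Hbeta Hgrowth x Hx)
    as [K [HK Hrate]].
  exists (K / eps); intros w Hw.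
  assert (Hw0 : 0 < w) by (pose proof (Rdiv_le_0_compat K eps HK Heps); lra).
  eapply Rle_lt_trans; [exact (Hrate w Hw0)|].
  apply (Rmult_lt_reg_r w); [exact Hw0|].
  replace (K / w * w) with (eps * (K / eps)) by (field; lra).
  apply Rmult_lt_compat_l; assumption.
Qed.
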